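(* Let $f$ be a non-constant rational function with $f(z)\neq 0$ for all $z\in\mathbb{C}$, all of whose poles are multiple. Let $Q[f]$ be the differential polynomial described in the context, of weight $w$. Then, for any $a\in\mathbb{C}$, the function $Q[f](z)-\frac{1}{z+a}$ has at least $w$ distinct zeros in $\mathbb{C}$.
   Context: Fix integers $k\geq 1$ and non-negative integers $p_0,p_1,\ldots,p_k,q_1,\ldots,q_k$ with $p_i\geq q_i$ for $i=1,\ldots,k$ and $q':=\sum_{i=1}^k q_i>0$. For a meromorphic function $f$, set $$Q[f]:=f^{p_0}\,(f^{p_1})^{(q_1)}\,(f^{p_2})^{(q_2)}\cdots(f^{p_k})^{(q_k)},$$ where $(f^{p})^{(q)}$ denotes the $q$-th derivative of $f^p$. With $p':=\sum_{i=1}^k p_i$, the degree of $Q[f]$ is $d:=p_0+p'$ and its weight is $w:=d+q'$. *)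

(* complex numbers C := R[i] over an arbitrary realType R
   (any realType is isomorphic to the reals, so R[i] is the field of complex numbers). *)
From HB Require Import structures.
From mathcomp Require Import all_boot all_order all_algebra.
From mathcomp Require Import complex.
From mathcomp Require Import reals.
Set Implicit Arguments. Unset Strict Implicit. Unset Printing Implicit Defensive.
Import Order.TTheory GRing.Theory Num.Theory.
Local Open Scope ring_scope.

Section RatFun.
Variable F : fieldType.

(* A rational function is represented by a pair (N, D) of polynomials,
   standing for N / D (with D <> 0). *)
Definition rfun := ({poly F} * {poly F})%type.

Definition rf_mul (g h : rfun) : rfun := (g.1 * h.1, g.2 * h.2).
Definition rf_sub (g h : rfun) : rfun := (g.1 * h.2 - h.1 * g.2, g.2 * h.2).
Definition rf_pow (g : rfun) (n : nat) : rfun := (g.1 ^+ n, g.2 ^+ n).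
Definition rf_deriv (g : rfun) : rfun :=
  (g.1^`() * g.2 - g.1 * g.2^`(), g.2 ^+ 2).
Definition rf_derivn (n : nat) (g : rfun) : rfun := iter n rf_deriv g.

(* z is a zero of the rational function N/D: N/D is holomorphic at z and
   vanishes there, i.e. N/D = N'/D' for some representation with
   D'(z) <> 0 and N'(z) = 0. *)
Definition rf_zero (g : rfun) (z : F) : Prop :=
  exists N' D' : {poly F}, g.1 * D' = N' * g.2 /\ D'.[z] != 0 /\ N'.[z] = 0.

Definition diffQ (k p0 : nat) (p q : 'I_k -> nat) (f : rfun) : rfun :=
  rf_mul (rf_pow f p0)
    (\big[rf_mul/(1, 1)]_(i < k) rf_derivn (q i) (rf_pow f (p i))).
End RatFun.

(* Since f has no zeros, f = c/D with c a nonzero constant.  Let L be the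
   product of the X - z over the s distinct roots z of D.  The logarithmic
   derivative D'/D has only simple poles, so D divides D' L and the j-th
   derivative of c/D^p is h/(D^p L^j) with deg h <= j(s-1) and h nonzero at
   the roots of D when j <= p.  Hence Q[f] = H/B with B = D^d L^q',
   deg H <= q'(s-1) and H, B without common root, and the zeros of
   Q[f] - 1/(z+a) are the roots of B - (z+a) H off the roots of B (after
   cancelling z+a when -a is a pole).  If deg A < deg B and A, B have no
   common root, the Wronskian A B' - A' B is nonzero and is divisible by the
   coprime non-radical parts of B - A and of B; comparing degrees, B - A has
   at least deg B - deg A + 1 - s distinct roots that are not roots of B.
   As all poles are multiple, deg D >= 2s, and this count is at least
   d + q' = w. *)

From HB Require Import structures.
From mathcomp Require Import all_boot all_order all_algebra.
From mathcomp Require Import complex reals.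
From mathcomp Require Import ring zify.
Set Implicit Arguments. Unset Strict Implicit. Unset Printing Implicit Defensive.
Import Order.TTheory GRing.Theory Num.Theory.
Local Open Scope ring_scope.

Lemma size_deriv_leq (R : nzRingType) (p : {poly R}) : (size p^`() <= (size p).-1)%N.
Proof.
have [->|p0] := eqVneq p 0; first by rewrite deriv0 size_poly0.
by rewrite -ltnS (ltn_predK (lt_size_deriv p0)) lt_size_deriv.
Qed.

Lemma deriv_exp_mul (R : comNzRingType) (P : {poly R}) n :
  (P ^+ n)^`() * P = P ^+ n * (P^`() *+ n).
Proof. by case: n => [|n]; rewrite ?derivC ?mulr0n ?mul0r ?mulr0 // deriv_exp exprS; ring. Qed.

Lemma size_mul_exp (R : idomainType) (u v : {poly R}) m n : u != 0 -> v != 0 ->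
  size (u ^+ m * v ^+ n) = ((size u).-1 * m + (size v).-1 * n).+1.
Proof.
move=> u0 v0; rewrite size_mul ?expf_neq0 //.
by rewrite (polySpred (expf_neq0 m u0)) (polySpred (expf_neq0 n v0)) !size_exp addSn addnS.
Qed.

Section RadicalFactorization.
Variable F : idomainType.
Implicit Types (p g : {poly F}) (S : seq F).

Lemma size_mul_prod_XsubC g S : g != 0 ->
  size (g * \prod_(x <- S) ('X - x%:P)) = (size g + size S)%N.
Proof.
move=> g0; rewrite size_mul ?size_prod_XsubC ?addnS //.
by rewrite -size_poly_eq0 size_prod_XsubC.
Qed.

Lemma prod_XsubC_split S z : uniq S -> z \in S ->
  exists2 L1, \prod_(x <- S) ('X - x%:P) = ('X - z%:P) * L1 & ~~ root L1 z.
Proof.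
move=> uS zS; exists (\prod_(x <- S | x != z) ('X - x%:P)); first exact: bigD1_seq.
rewrite /root horner_prod prodf_seq_neq0; apply/allP => x _; apply/implyP => xz.
by rewrite !hornerE subr_eq0 eq_sym.
Qed.

Lemma deriv_prod_XsubC_neq0 S z : uniq S -> z \in S ->
  (\prod_(x <- S) ('X - x%:P))^`().[z] != 0.
Proof.
move=> uS zS; have [L1 -> L1z] := prod_XsubC_split uS zS.
by rewrite derivM derivXsubC !hornerE subrr mul0r addr0.
Qed.

Lemma root_cofactor_multiple g S z : uniq S -> z \in S ->
  ('X - z%:P) ^+ 2 %| g * \prod_(x <- S) ('X - x%:P) -> root g z.
Proof.
move=> uS zS; have [L1 -> L1z] := prod_XsubC_split uS zS.
rewrite mulrCA expr2 dvdp_mul2l ?polyXsubC_eq0 // dvdp_XsubCl rootM.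
by rewrite (negbTE L1z) orbF.
Qed.

Lemma double_size_roots_lt p g S : p != 0 -> uniq S ->
  p = g * \prod_(x <- S) ('X - x%:P) ->
  (forall z, z \in S -> ('X - z%:P) ^+ 2 %| p) -> (2 * size S < size p)%N.
Proof.
move=> p0 uS pE dbl; have g0 : g != 0 by apply: contra_neq p0 => g0; rewrite pE g0 mul0r.
have Sg : (size S < size g)%N.
  apply: max_poly_roots => //; apply/allP => z zS.
  by apply: (root_cofactor_multiple uS zS); rewrite -pE; exact: dbl.
by rewrite pE size_mul_prod_XsubC //; lia.
Qed.

End RadicalFactorization.

Lemma radical_factorization (F : closedFieldType) (p : {poly F}) : p != 0 ->
  exists S g, [/\ uniq S, forall z, root p z = (z \in S),
    p = g * \prod_(x <- S) ('X - x%:P) & g %| p^`()].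
Proof.
have [n] := ubnP (size p); elim: n p => // n IH p sp p0.
have [/size_poly1P [c c0 ->]|] := boolP (size p == 1).
  exists [::], c%:P; split => //; last by rewrite derivC dvdp0.
    by move=> z; rewrite rootC in_nil; exact/negbTE.
  by rewrite big_nil mulr1.
move/closed_rootP => [x px].
have [m [q /implyP /(_ p0) qx pE]] := multiplicity_XsubC p x.
case: m pE => [|m] pE; first by move: px; rewrite pE expr0 mulr1 (negbTE qx).
have q0 : q != 0 by apply: contra_neq p0 => q0; rewrite pE q0 mul0r.
have [|S [g [uS qS qE gq']]] := IH q _ q0.
  move: sp; rewrite pE size_mul ?expf_neq0 ?polyXsubC_eq0 // size_exp_XsubC addnS /=.
  by move: (size q) => s; lia.
have xS : x \notin S by rewrite -qS.
exists (x :: S), (g * ('X - x%:P) ^+ m); split.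
- by rewrite /= xS uS.
- by move=> z; rewrite pE rootM qS in_cons root_exp_XsubC orbC.
- by rewrite big_cons pE qE exprS; ring.
case/dvdpP: gq' => h q'E.
rewrite pE derivM q'E qE deriv_exp derivXsubC mul1r exprS -mulr_natr.
by apply/dvdpP; exists (h * ('X - x%:P) + \prod_(y <- S) ('X - y%:P) * m.+1%:R); ring.
Qed.

Section Wronskian.
Variable R : idomainType.
Implicit Types A B g : {poly R}.

Definition wronskian A B := A * B^`() - A^`() * B.

Lemma wronskian_subKl A B : wronskian (B - A) B = - wronskian A B.
Proof. by rewrite /wronskian derivB; ring. Qed.

Lemma dvdp_wronskianl g A B : g %| A -> g %| A^`() -> g %| wronskian A B.
Proof. by move=> gA gA'; rewrite dvdp_sub ?dvdp_mulr. Qed.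

Lemma dvdp_wronskianr g A B : g %| B -> g %| B^`() -> g %| wronskian A B.
Proof. by move=> gB gB'; rewrite dvdp_sub ?dvdp_mull. Qed.

Lemma size_wronskian A B : (size (wronskian A B) <= (size A + size B).-2)%N.
Proof.
have [->|B0] := eqVneq B 0; first by rewrite /wronskian deriv0 !mulr0 subr0 size_poly0.
have [->|A0] := eqVneq A 0; first by rewrite /wronskian deriv0 !mul0r subr0 size_poly0.
rewrite -!size_poly_gt0 in A0 B0.
apply: leq_trans (size_polyD _ _) _; rewrite size_polyN geq_max.
have dA := size_deriv_leq A; have dB := size_deriv_leq B.
apply/andP; split; apply: leq_trans (size_polyMleq _ _) _;
  move: A0 B0 dA dB; move: (size A) (size B) (size A^`()) (size B^`()) => a b a' b';
  by rewrite -!subn1; lia.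
Qed.

End Wronskian.

Lemma wronskian_neq0 (R : numDomainType) (A B : {poly R}) z :
  B != 0 -> root B z -> A.[z] != 0 -> wronskian A B != 0.
Proof.
move=> B0 Bz Az; have [m [B1 /implyP /(_ B0) B1z BE]] := multiplicity_XsubC B z.
case: m BE => [|m] BE; first by move: Bz; rewrite BE expr0 mulr1 (negbTE B1z).
pose V := A * B1^`() * ('X - z%:P) + A * B1 * m.+1%:R - A^`() * B1 * ('X - z%:P).
have -> : wronskian A B = ('X - z%:P) ^+ m * V.
  by rewrite /wronskian /V BE derivM deriv_exp derivXsubC mul1r -mulr_natr exprS; ring.
have Vz : V.[z] != 0.
  rewrite /V !hornerE subrr !mulr0 add0r subr0 -polyC_natr hornerC.
  by rewrite !mulf_neq0 // pnatr_eq0.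
rewrite mulf_neq0 ?expf_neq0 ?polyXsubC_eq0 //.
by apply: contraNneq Vz => ->; rewrite horner0.
Qed.

Lemma roots_subr_ge (F : numClosedFieldType) (A B : {poly F}) (U : seq F) :
  uniq U -> (forall z, root B z -> z \in U) -> (forall z, root B z -> A.[z] != 0) ->
  (size A < size B)%N -> (1 < size B)%N ->
  exists S, [/\ uniq S, forall z, z \in S -> root (B - A) z && ~~ root B z &
    (size B - size A + 1 - size U <= size S)%N].
Proof.
move=> uU BU AB sAB sB.
have B0 : B != 0 by rewrite -size_poly_gt0 (ltn_trans _ sB).
have sBA : size (B - A) = size B by rewrite size_polyDl // size_polyN.
have BA0 : B - A != 0 by rewrite -size_poly_gt0 sBA (ltn_trans _ sB).
have BA_B x : root (B - A) x -> ~~ root B x.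
  apply: contraTN => Bx; rewrite rootE hornerD hornerN (eqP Bx) sub0r oppr_eq0.
  exact: AB.
have [z0 Bz0] : exists z, root B z by apply/closed_rootP; rewrite neq_ltn sB orbT.
have [SF [g [uSF rootF gE gF']]] := radical_factorization BA0.
have [SB [gB [uSB rootB gBE gB']]] := radical_factorization B0.
exists SF; split => // [z zS|]; first by rewrite rootF zS BA_B ?rootF.
have g0 : g != 0 by apply: contra_neq BA0 => g0; rewrite gE g0 mul0r.
have gB0 : gB != 0 by apply: contra_neq B0 => gB0; rewrite gBE gB0 mul0r.
(* [g] and [gB] are coprime divisors of the nonzero Wronskian of [A] and [B]. *)
have gW : g %| wronskian A B.
  by rewrite -dvdpNr -wronskian_subKl dvdp_wronskianl // gE dvdp_mulr.
have gBW : gB %| wronskian A B by rewrite dvdp_wronskianr // gBE dvdp_mulr.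
have cop : coprimep g gB.
  apply: Pdiv.ClosedField.root_coprimep => x gx.
  have BAx : root (B - A) x by rewrite gE rootM gx.
  by apply: contraNneq (BA_B x BAx) => gBx; rewrite gBE rootM rootE gBx eqxx.
have ggBW : g * gB %| wronskian A B by rewrite Gauss_dvdp // gW gBW.
have sW := leq_trans (dvdp_leq (wronskian_neq0 B0 Bz0 (AB z0 Bz0)) ggBW) (size_wronskian A B).
have sF : size B = (size g + size SF)%N by rewrite -sBA gE size_mul_prod_XsubC.
have sG : size B = (size gB + size SB)%N by rewrite {1}gBE size_mul_prod_XsubC.
have SBU : (size SB <= size U)%N.
  by apply: uniq_leq_size uSB _ => x; rewrite -rootB; exact: BU.
rewrite size_mul // in sW; rewrite -!size_poly_gt0 in g0 gB0.
move: sW sF sG SBU sAB g0 gB0.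
move: (size A) (size B) (size g) (size gB) (size SF) (size SB) (size U) => a b m n sf sb u.
by rewrite -!subn1; lia.
Qed.

Section RationalFunctions.
Variable F : fieldType.
Implicit Types g h : rfun F.

Definition rf_equiv g h := g.1 * h.2 = h.1 * g.2.

Lemma rf_equiv_trans g h k : h.2 != 0 -> rf_equiv g h -> rf_equiv h k -> rf_equiv g k.
Proof.
rewrite /rf_equiv => h0 gh hk; apply: (mulIf h0).
by rewrite mulrAC gh mulrAC hk mulrAC.
Qed.

Lemma rf_equiv_mulKr g (N E Y : {poly F}) : Y != 0 ->
  rf_equiv g (N * Y, E * Y) -> rf_equiv g (N, E).
Proof. by rewrite /rf_equiv /= => Y0 gNE; apply: (mulIf Y0); rewrite -mulrA gNE mulrAC. Qed.

Lemma rf_equiv_deriv g h : rf_equiv g h -> rf_equiv (rf_deriv g) (rf_deriv h).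
Proof.
case: g h => N E [N' E']; rewrite /rf_equiv /= => e.
have e' := congr1 deriv e; rewrite !derivM in e'.
apply/eqP; rewrite -subr_eq0; apply/eqP.
have -> : (N^`() * E - N * E^`()) * E' ^+ 2 - (N'^`() * E' - N' * E'^`()) * E ^+ 2
  = E * E' * ((N^`() * E' + N * E'^`()) - (N'^`() * E + N' * E^`()))
    + (E^`() * E' + E * E'^`()) * (N' * E - N * E') by ring.
by rewrite e' e !subrr !mulr0 addr0.
Qed.

Lemma rf_equiv_mul g1 g2 h1 h2 :
  rf_equiv g1 h1 -> rf_equiv g2 h2 -> rf_equiv (rf_mul g1 g2) (rf_mul h1 h2).
Proof. by rewrite /rf_equiv /= => e1 e2; rewrite mulrACA e1 e2 mulrACA. Qed.

Lemma rf_equiv_prod (I : Type) (r : seq I) (P : pred I) (G : I -> rfun F)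
    (N E : I -> {poly F}) :
  (forall i, P i -> rf_equiv (G i) (N i, E i)) ->
  rf_equiv (\big[@rf_mul F/(1, 1)]_(i <- r | P i) G i)
           (\prod_(i <- r | P i) N i, \prod_(i <- r | P i) E i).
Proof.
move=> GNE; apply: (big_rec3 (fun g N E => rf_equiv g (N, E))).
  by rewrite /rf_equiv mulr1.
by move=> i g N' E' Pi; apply: rf_equiv_mul (GNE i Pi).
Qed.

Lemma rf_equiv_sub g h Y : rf_equiv g h -> rf_equiv (rf_sub g (1, Y)) (rf_sub h (1, Y)).
Proof.
rewrite /rf_equiv /= => e.
have -> : (g.1 * Y - 1 * g.2) * (h.2 * Y) = g.1 * h.2 * Y ^+ 2 - g.2 * h.2 * Y by ring.
by rewrite e; ring.
Qed.

End RationalFunctions.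

Lemma rf_zero_sub (F : fieldType) (g : rfun F) (A B Y : {poly F}) z :
  rf_equiv (rf_sub g (1, Y)) (A - B, B * Y) ->
  root (B - A) z -> ~~ root B z -> Y.[z] != 0 -> rf_zero (rf_sub g (1, Y)) z.
Proof.
move=> gAB BAz Bz Yz; exists (A - B), (B * Y); split; [exact: gAB | split].
  by rewrite hornerM mulf_neq0.
by apply/eqP; rewrite -opprB hornerN oppr_eq0.
Qed.

Section ZerosSubInv.
Variables (F : numClosedFieldType) (g : rfun F) (H B : {poly F}) (U : seq F) (a : F).
Hypotheses (gHB : rf_equiv g (H, B)) (uU : uniq U).
Hypotheses (BU : forall z, root B z -> z \in U) (HB : forall z, root B z -> H.[z] != 0).
Hypothesis sHB : (size H + 1 < size B)%N.
Let Y := 'X + a%:P.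

Let Y_neq0 : Y != 0.
Proof. by rewrite -size_poly_gt0 /Y size_XaddC. Qed.

Let Y_XsubC : Y = 'X - (- a)%:P.
Proof. by rewrite polyCN opprK. Qed.

Let root_Y z : Y.[z] = 0 -> z = - a.
Proof. by rewrite Y_XsubC hornerXsubC => /eqP; rewrite subr_eq0 => /eqP. Qed.

Let gY : rf_equiv (rf_sub g (1, Y)) (H * Y - B, B * Y).
Proof. by have := rf_equiv_sub Y gHB; rewrite /rf_sub /= !mul1r. Qed.

Lemma rf_zeros_sub_inv_XaddC_nroot : ~~ root B (- a) ->
  exists S, [/\ uniq S, (size B - size H - size U <= size S)%N &
    forall z, z \in S -> rf_zero (rf_sub g (1, Y)) z].
Proof.
move=> Ba; have [|||S [uS SBA sS]] := @roots_subr_ge _ (H * Y) B U uU BU.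
- move=> z Bz; rewrite hornerM mulf_neq0 ?HB //.
  by apply: contraNneq Ba => /root_Y <-.
- by apply: leq_ltn_trans (size_polyMleq _ _) _; rewrite /Y size_XaddC addn2 -addn1.
- by apply: leq_ltn_trans sHB; rewrite addn1.
exists S; split => // [|z zS].
  apply: leq_trans sS; have := size_polyMleq H Y; rewrite /Y size_XaddC addn2 /=.
  by move: (size (H * Y)) => *; lia.
have /andP [BAz Bz] := SBA z zS; apply: (rf_zero_sub gY BAz Bz).
apply: contraNneq Bz => Yz; move: BAz.
by rewrite /root hornerD hornerN hornerM Yz mulr0 subr0.
Qed.

Lemma rf_zeros_sub_inv_XaddC_root : Y ^+ 2 %| B ->
  exists S, [/\ uniq S, (size B - size H - size U <= size S)%N &
    forall z, z \in S -> rf_zero (rf_sub g (1, Y)) z].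
Proof.
(* Q - 1/Y = (H - B1) / (B1 Y) where B = B1 Y, and -a is still a root of B1. *)
move=> YB; have [B1 BE] : exists B1, B = B1 * Y.
  by apply/dvdpP; apply: dvdp_trans YB; rewrite expr2 dvdp_mulr.
have B1a : root B1 (- a) by move: YB; rewrite BE expr2 dvdp_mul2r // Y_XsubC dvdp_XsubCl.
have B10 : B1 != 0 by apply: contraTneq sHB => B10; rewrite BE B10 mul0r size_poly0.
have sB : size B = (size B1).+1 by rewrite BE size_mul // /Y size_XaddC addn2.
have B1B z : root B1 z -> root B z by rewrite BE rootM => ->.
have H0 : (0 < size H)%N.
  by rewrite size_poly_gt0; apply: contraTneq (HB (B1B _ B1a)) => ->; rewrite horner0 eqxx.
have [||||S [uS SBA sS]] := @roots_subr_ge _ H B1 U uU.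
- by move=> z /B1B; exact: BU.
- by move=> z /B1B; exact: HB.
- by move: sHB; rewrite sB addn1.
- by move: sHB; rewrite sB; move: (size H) (size B1) H0 => *; lia.
exists S; split => // [|z zS].
  by apply: leq_trans sS; rewrite sB; move: (size H) (size B1) => *; lia.
have /andP [BAz Bz] := SBA z zS; apply: (rf_zero_sub _ BAz Bz).
  by apply: (rf_equiv_mulKr Y_neq0); rewrite mulrBl -BE.
by apply: contraNneq Bz => /root_Y ->.
Qed.

Lemma rf_zeros_sub_inv_XaddC : (root B (- a) -> Y ^+ 2 %| B) ->
  exists S, [/\ uniq S, (size B - size H - size U <= size S)%N &
    forall z, z \in S -> rf_zero (rf_sub g (1, Y)) z].
Proof.
move=> Ba2; have [/Ba2|] := boolP (root B (- a)).
  exact: rf_zeros_sub_inv_XaddC_root.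
exact: rf_zeros_sub_inv_XaddC_nroot.
Qed.

End ZerosSubInv.

Section InversePowerDerivatives.
Variables (F : numFieldType) (D : {poly F}) (S : seq F).
Let L := \prod_(x <- S) ('X - x%:P).
Hypotheses (D0 : D != 0) (DL : D %| D^`() * L).
(* [D'/D = T/L]: the poles of the logarithmic derivative of [D] are simple. *)
Let T := D^`() * L %/ D.

Let L_neq0 : L != 0.
Proof. exact/monic_neq0/monic_prod_XsubC. Qed.

Let mulTD : T * D = D^`() * L.
Proof. exact: divpK. Qed.

Definition log_deriv_num p j := T *+ p + L^`() *+ j.

Let deriv_DL_mulL p j :
  (D ^+ p * L ^+ j)^`() * L = D ^+ p * L ^+ j * log_deriv_num p j.
Proof.
have DpL : (D ^+ p)^`() * L = D ^+ p * (T *+ p).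
  by apply: (mulIf D0); rewrite mulrAC deriv_exp_mul -!mulrA !mulrnAl mulTD.
transitivity ((D ^+ p)^`() * L * L ^+ j + D ^+ p * ((L ^+ j)^`() * L)).
  by rewrite derivM; ring.
by rewrite DpL deriv_exp_mul /log_deriv_num; ring.
Qed.

Let size_T : (size T <= size S)%N.
Proof.
have [->|T0] := eqVneq T 0; first by rewrite size_poly0.
have := size_polyMleq D^`() L; rewrite -mulTD size_mul // size_prod_XsubC.
have := size_deriv_leq D; have := D0; rewrite -size_poly_gt0.
by move: (size T) (size D) (size D^`()) => t d d'; rewrite -!subn1; lia.
Qed.

Lemma size_log_deriv_num p j : (size (log_deriv_num p j) <= size S)%N.
Proof.
rewrite /log_deriv_num -!scaler_nat; apply: leq_trans (size_polyD _ _) _.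
rewrite geq_max !(leq_trans (size_scale_leq _ _)) ?size_T //.
by apply: leq_trans (size_deriv_leq _) _; rewrite size_prod_XsubC.
Qed.

Variable c : F.

Fixpoint derivn_num p j := if j is j'.+1 then
  (derivn_num p j')^`() * L - derivn_num p j' * log_deriv_num p j' else c%:P ^+ p.

Lemma rf_derivn_inv_pow p j : rf_equiv (rf_derivn j (rf_pow (c%:P, D) p))
  (derivn_num p j, D ^+ p * L ^+ j).
Proof.
elim: j => [|j IH]; first by rewrite /rf_equiv /= expr0 mulr1.
rewrite /rf_derivn iterS -/(rf_derivn j _).
apply: rf_equiv_trans (rf_equiv_deriv IH) _.
  by rewrite /= expf_neq0 // mulf_neq0 ?expf_neq0 ?L_neq0.
rewrite /rf_equiv /=; set B := D ^+ p * L ^+ j; set h := derivn_num p j.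
have -> : D ^+ p * L ^+ j.+1 = B * L by rewrite exprSr mulrA.
transitivity (h^`() * B * B * L - h * B * (B^`() * L)); first by ring.
by rewrite deriv_DL_mulL -/B; ring.
Qed.

Lemma size_derivn_num p j : (size (derivn_num p j) <= j * (size S).-1 + 1)%N.
Proof.
elim: j => [|j IH] /=; first by rewrite -rmorphXn size_polyC_leq1.
apply: leq_trans (size_polyD _ _) _; rewrite size_polyN geq_max.
have := size_polyMleq (derivn_num p j)^`() L; have := size_deriv_leq (derivn_num p j).
have := size_polyMleq (derivn_num p j) (log_deriv_num p j).
have := size_log_deriv_num p j; rewrite size_prod_XsubC.
rewrite mulSn; move: IH; move: (j * _)%N (size (derivn_num p j)) => t h.
move: (size (derivn_num p j)^`()) (size (log_deriv_num p j)) (size S) => h' k s.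
move: (size (_^`() * L)) (size (_ * log_deriv_num p j)) => u v.
by rewrite -!subn1; lia.
Qed.

Lemma size_prod_derivn_num (I : Type) (r : seq I) (p q : I -> nat) :
  (size (\prod_(i <- r) derivn_num (p i) (q i))%R
     <= (\sum_(i <- r) q i) * (size S).-1 + 1)%N.
Proof.
elim: r => [|i r IH]; first by rewrite !big_nil size_poly1.
rewrite !big_cons mulnDl; apply: leq_trans (size_polyMleq _ _) _.
move: (size_derivn_num (p i) (q i)) IH.
move: (q i * _)%N ((\sum_(j <- r) q j) * _)%N => x y.
move: (size (derivn_num _ _)) (size (\prod_(j <- r) derivn_num (p j) (q j))%R) => u v.
by rewrite -!subn1; lia.
Qed.

Lemma diffQ_Cdiv_equiv k p0 (p q : 'I_k -> nat) :
  rf_equiv (diffQ p0 p q (c%:P, D))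
    (c%:P ^+ p0 * \prod_(i < k) derivn_num (p i) (q i),
     D ^+ (p0 + \sum_(i < k) p i) * L ^+ (\sum_(i < k) q i)).
Proof.
rewrite exprD -mulrA -!prodrXr -big_split /=.
apply: (@rf_equiv_mul _ _ _ (_, _) (_, _)); first by rewrite /rf_equiv.
by apply: rf_equiv_prod => i _; exact: rf_derivn_inv_pow.
Qed.

Hypotheses (c0 : c != 0) (uS : uniq S).
Hypothesis rootD : forall z, root D z = (z \in S).

Let T_at_root z : z \in S -> exists2 m, (0 < m)%N & T.[z] = L^`().[z] *+ m.
Proof.
move=> zS; have [L1 LE L1z] := prod_XsubC_split uS zS.
have L'z : L^`().[z] = L1.[z].
  by rewrite /L LE derivM derivXsubC !hornerE subrr mul0r addr0.
have [m [D1 /implyP /(_ D0) D1z DE]] := multiplicity_XsubC D z.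
case: m DE => [|m] DE; first by move: (rootD z); rewrite zS DE expr0 mulr1 (negbTE D1z).
exists m.+1 => //.
have TD1 : T * D1 = (D1^`() * ('X - z%:P) + D1 *+ m.+1) * L1.
  have Xz0 : ('X - z%:P) ^+ m.+1 != 0 by rewrite expf_neq0 ?polyXsubC_eq0.
  apply: (mulIf Xz0); rewrite -mulrA -DE mulTD /L LE.
  by rewrite DE derivM deriv_exp derivXsubC mul1r !exprS; ring.
have := congr1 (horner^~ z) TD1; rewrite /= !hornerE subrr mulr0 add0r L'z => e.
by apply: (mulIf D1z); rewrite e hornerMn mulrnAl mulrC mulrnAl.
Qed.

Lemma derivn_num_root_neq0 p j z : (j <= p)%N -> z \in S -> (derivn_num p j).[z] != 0.
Proof.
move=> jp zS; elim: j jp => [_|j IH jp] /=.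
  by rewrite -rmorphXn hornerC expf_neq0.
(* the value at z is - (derivn_num p j).[z] * L'(z) * (p m + j), with m the
   multiplicity of z in D *)
have [m m0 Tz] := T_at_root zS.
have Lz : L.[z] = 0 by apply/rootP; rewrite root_prod_XsubC.
rewrite hornerD hornerN !hornerM Lz mulr0 sub0r oppr_eq0 /log_deriv_num hornerD.
rewrite !hornerMn Tz -mulrnA -mulrnDr mulf_neq0 ?IH 1?ltnW // -mulr_natr.
by rewrite mulf_neq0 ?deriv_prod_XsubC_neq0 // pnatr_eq0 -lt0n addn_gt0 muln_gt0 m0 (leq_trans _ jp).
Qed.

Lemma prod_derivn_num_root_neq0 (I : Type) (r : seq I) (p q : I -> nat) z :
  (forall i, q i <= p i)%N -> z \in S ->
  (\prod_(i <- r) derivn_num (p i) (q i)).[z] != 0.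
Proof.
move=> qp zS; rewrite horner_prod; apply: (big_ind (fun x : F => x != 0)).
- exact: oner_neq0.
- exact: mulf_neq0.
- by move=> i _; exact: derivn_num_root_neq0.
Qed.

End InversePowerDerivatives.

Lemma zeros_diffQ_Cdiv_sub_inv (F : numClosedFieldType) (c : F) (D : {poly F})
    (S : seq F) k p0 (p q : 'I_k -> nat) (a : F) :
  c != 0 -> D != 0 -> uniq S -> (forall z, root D z = (z \in S)) ->
  D %| D^`() * \prod_(x <- S) ('X - x%:P) ->
  (forall z, root D z -> ('X - z%:P) ^+ 2 %| D) ->
  (0 < size S)%N -> (2 * size S < size D)%N ->
  (forall i, q i <= p i)%N -> (0 < \sum_(i < k) q i)%N ->
  exists S', [/\ uniq S',
    (p0 + \sum_(i < k) p i + \sum_(i < k) q i <= size S')%N &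
    forall z, z \in S' -> rf_zero (rf_sub (diffQ p0 p q (c%:P, D)) (1, 'X + a%:P)) z].
Proof.
move=> c0 D0 uS rootD DL Ddbl S0 SD qp q0.
set d := (p0 + \sum_(i < k) p i)%N; set q' := (\sum_(i < k) q i)%N.
have d0 : (0 < d)%N.
  by rewrite (leq_trans q0) // (leq_trans (leq_sum _ (fun i _ => qp i))) ?leq_addl.
set L := \prod_(x <- S) ('X - x%:P) in DL *.
set H := c%:P ^+ p0 * \prod_(i < k) derivn_num D S c (p i) (q i).
set B := D ^+ d * L ^+ q'.
have rootB z : root B z -> z \in S.
  rewrite rootM /root !horner_exp !expf_eq0 => /orP [/andP [_ Dz]|/andP [_ Lz]].
    by rewrite -rootD.
  by rewrite -root_prod_XsubC.
have HB z : root B z -> H.[z] != 0.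
  move/rootB => zS; rewrite hornerM -rmorphXn hornerC mulf_neq0 ?expf_neq0 //.
  exact: prod_derivn_num_root_neq0.
have sH : (size H <= q' * (size S).-1 + 1)%N.
  apply: leq_trans (size_polyMleq _ _) _.
  rewrite -rmorphXn size_polyC expf_neq0 //= add0n.
  exact: (size_prod_derivn_num D0 DL c (index_enum 'I_k) p q).
have sB : size B = ((size D).-1 * d + size S * q').+1.
  by rewrite size_mul_exp // ?monic_neq0 /L ?monic_prod_XsubC ?size_prod_XsubC.
have [sHB sS] : (size H + 1 < size B /\ d + q' <= size B - size H - size S)%N.
  have dDS : (d + size S <= (size D).-1 * d)%N.
    by move: SD S0 d0; move: (size S) (size D) => s n; rewrite -subn1; nia.
  have qS : (q' * (size S).-1 + q' = size S * q')%N by rewrite -mulnSr prednK // mulnC.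
  rewrite sB; move: sH dDS qS.
  by move: (size H) ((size D).-1 * d)%N (size S * q')%N (q' * (size S).-1)%N => *; lia.
have [|S' [uS' sS' zS']] :=
  rf_zeros_sub_inv_XaddC (a := a) (diffQ_Cdiv_equiv D0 DL c p0 p q) uS rootB HB sHB.
  move=> /rootB; rewrite -rootD => /Ddbl; rewrite polyCN opprK => Da.
  by rewrite (dvdp_trans Da) // dvdp_mulr // -{1}(expr1 D) dvdp_exp2l.
by exists S'; split => //; apply: leq_trans sS'.
Qed.

Theorem lemma5 (R : realType) (k p0 : nat) (p q : 'I_k -> nat)
    (P D : {poly R[i]}) (a : R[i]) :
  (0 < k)%N ->
  (forall i, (q i <= p i)%N) ->
  (0 < \sum_(i < k) q i)%N ->
  (* f = P / D in lowest terms *)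
  D != 0 -> coprimep P D ->
  (* f is non-constant *)
  (forall c : R[i], P != c *: D) ->
  (* f(z) <> 0 for all z in C *)
  (forall z : R[i], ~~ root P z) ->
  (* all poles of f are multiple *)
  (forall z : R[i], root D z -> ('X - z%:P) ^+ 2 %| D) ->
  exists S : seq R[i],
    [/\ uniq S,
        (p0 + \sum_(i < k) p i + \sum_(i < k) q i <= size S)%N &
        forall z, z \in S ->
          rf_zero (rf_sub (diffQ p0 p q (P, D)) (1, 'X + a%:P)) z].
Proof.
(* [0 < k] follows from [0 < \sum_i q i], and [P] will be a nonzero constant. *)
move=> _ qp q0 D0 _ nonconst P_root Ddbl.
have [c c0 PE] : exists2 c, c != 0 & P = c%:P.
  apply/size_poly1P; apply: contraT => /closed_rootP [z Pz].
  by move: (P_root z); rewrite Pz.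
have [S [g [uS rootD DE gD']]] := radical_factorization D0.
have S0 : (0 < size S)%N.
  have /closed_rootP [z Dz] : size D != 1.
    apply: contra (nonconst (c / D`_0)) => /size_poly1P [e e0 ->].
    by rewrite PE -mul_polyC -polyCM coefC divfK.
  by move: Dz; rewrite rootD; case: S {uS rootD DE}.
have SD := double_size_roots_lt D0 uS DE (fun z zS => Ddbl z (etrans (rootD z) zS)).
have DL : D %| D^`() * \prod_(x <- S) ('X - x%:P).
  by case/dvdpP: gD' => h ->; rewrite -mulrA -DE dvdp_mull.
by rewrite PE; exact: zeros_diffQ_Cdiv_sub_inv c0 D0 uS rootD DL Ddbl S0 SD qp q0.
Qed.
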